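(* Let $\theta\le0$ be such that $F_\theta(t_1,t_2)=t_1^{\,1+\theta\log t_2}\,t_2$, $0<t_1,t_2<1$, is a bivariate distribution function. Let $X=(X_1,X_2)$ be a nonnegative bivariate random vector with absolutely continuous distribution function $F$ supported in $(0,1)^2$, finite $\overline\varepsilon^*_i(X;t_1,t_2)$ and bivariate EIT components $m_i^X(t_1,t_2)$. Then $$\overline\varepsilon^*_i(X;t_1,t_2)=\left(\frac{1+\theta\log t_j}{2+\theta\log t_j}\right)m_i^X(t_1,t_2),\qquad i,j\in\{1,2\},\ i\ne j,$$ holds for all $0<t_1,t_2<1$ if and only if $F=F_\theta$, i.e. $F(t_1,t_2)=t_1^{\,1+\theta\log t_2}\,t_2$ for $0<t_1,t_2<1$.
   Context: Let $F(x_1,x_2)=P(X_1\le x_1,X_2\le x_2)$. For $t_1,t_2>0$ with $F(t_1,t_2)>0$ define the conditional dynamic cumulative past entropies (CDCPE) $$\overline\varepsilon^*_1(X;t_1,t_2)=-\int_0^{t_1}\frac{F(x_1,t_2)}{F(t_1,t_2)}\log\frac{F(x_1,t_2)}{F(t_1,t_2)}dx_1,\qquad \overline\varepsilon^*_2(X;t_1,t_2)=-\int_0^{t_2}\frac{F(t_1,x_2)}{F(t_1,t_2)}\log\frac{F(t_1,x_2)}{F(t_1,t_2)}dx_2,$$ and the components of the bivariate expected inactivity time $m_1^X(t_1,t_2)=\frac{1}{F(t_1,t_2)}\int_0^{t_1}F(x_1,t_2)dx_1$, $m_2^X(t_1,t_2)=\frac{1}{F(t_1,t_2)}\int_0^{t_2}F(t_1,x_2)dx_2$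 (i.e. $m_i^X(t_1,t_2)=E(t_i-X_i\mid X_1<t_1,X_2<t_2)$). *)

From Stdlib Require Import Reals Lra List ClassicalEpsilon.
Open Scope R_scope.

(** Riemann integral as a total function: the value of the Riemann integral
    of [f] on [a,b] when [f] is Riemann integrable there (arbitrary otherwise;
    integrability is always assumed separately where needed). *)
Definition RInt (f : R -> R) (a b : R) : R :=
  epsilon (inhabits 0)
    (fun v => exists pr : Riemann_integrable f a b, RiemannInt pr = v).

Definition rect_mass (F : R -> R -> R) (a1 b1 a2 b2 : R) : R :=
  F b1 b2 - F a1 b2 - F b1 a2 + F a1 a2.

Definition is_biv_cdf (F : R -> R -> R) : Prop :=
  (forall a1 b1 a2 b2, a1 <= b1 -> a2 <= b2 -> 0 <= rect_mass F a1 b1 a2 b2)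
  /\ (forall x1 x2 eps, 0 < eps -> exists delta, 0 < delta /\
        forall y1 y2, x1 <= y1 < x1 + delta -> x2 <= y2 < x2 + delta ->
          Rabs (F y1 y2 - F x1 x2) < eps)
  /\ (forall x2 eps, 0 < eps -> exists M, forall x1, x1 <= M -> Rabs (F x1 x2) < eps)
  /\ (forall x1 eps, 0 < eps -> exists M, forall x2, x2 <= M -> Rabs (F x1 x2) < eps)
  /\ (forall eps, 0 < eps -> exists M, forall x1 x2, M <= x1 -> M <= x2 ->
        Rabs (F x1 x2 - 1) < eps).

(** Rectangles (a1,b1,a2,b2) meaning (a1,b1] x (a2,b2]. *)
Definition rect := (R * R * R * R)%type.

Definition rect_wf (r : rect) : Prop :=
  let '(a1, b1, a2, b2) := r in a1 <= b1 /\ a2 <= b2.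

Definition rect_area (r : rect) : R :=
  let '(a1, b1, a2, b2) := r in (b1 - a1) * (b2 - a2).

Definition rect_massF (F : R -> R -> R) (r : rect) : R :=
  let '(a1, b1, a2, b2) := r in rect_mass F a1 b1 a2 b2.

Definition rect_disjoint (r s : rect) : Prop :=
  let '(a1, b1, a2, b2) := r in
  let '(c1, d1, c2, d2) := s in
  b1 <= c1 \/ d1 <= a1 \/ b2 <= c2 \/ d2 <= a2.

Definition sumR (l : list R) : R := fold_right Rplus 0 l.

(** Absolute continuity (w.r.t. Lebesgue measure) of the probability measure
    with distribution function F: epsilon-delta condition on finite families of
    pairwise disjoint rectangles (equivalent to mu << Lebesgue for finite mu). *)
Definition biv_abs_cont (F : R -> R -> R) : Prop :=
  forall eps, 0 < eps -> exists delta, 0 < delta /\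
    forall l : list rect,
      Forall rect_wf l -> ForallOrdPairs rect_disjoint l ->
      sumR (map rect_area l) < delta ->
      sumR (map (rect_massF F) l) < eps.

Definition supported_unit_square (F : R -> R -> R) : Prop :=
  (forall x1 x2, (x1 <= 0 \/ x2 <= 0) -> F x1 x2 = 0) /\ F 1 1 = 1.

Definition cdcpe1_integrand (F : R -> R -> R) (t1 t2 : R) (x1 : R) : R :=
  (F x1 t2 / F t1 t2) * ln (F x1 t2 / F t1 t2).

Definition cdcpe2_integrand (F : R -> R -> R) (t1 t2 : R) (x2 : R) : R :=
  (F t1 x2 / F t1 t2) * ln (F t1 x2 / F t1 t2).

Definition CDCPE1 (F : R -> R -> R) (t1 t2 : R) : R :=
  - RInt (cdcpe1_integrand F t1 t2) 0 t1.

Definition CDCPE2 (F : R -> R -> R) (t1 t2 : R) : R :=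
  - RInt (cdcpe2_integrand F t1 t2) 0 t2.

Definition EIT1 (F : R -> R -> R) (t1 t2 : R) : R :=
  / F t1 t2 * RInt (fun x1 => F x1 t2) 0 t1.

Definition EIT2 (F : R -> R -> R) (t1 t2 : R) : R :=
  / F t1 t2 * RInt (fun x2 => F t1 x2) 0 t2.

(** The family F_theta(t1,t2) = t1^(1 + theta log t2) t2 on (0,1)^2,
    extended to R^2 as a distribution function supported in (0,1)^2. *)
Definition Ftheta (theta : R) (t1 t2 : R) : R :=
  let u := Rmin t1 1 in
  let v := Rmin t2 1 in
  if Rle_dec u 0 then 0 else if Rle_dec v 0 then 0 else
  Rpower u (1 + theta * ln v) * v.

(* Fix a row [g x = F x t2] and put [a = 1 + theta ln t2 >= 1], [H t = int_0^t g] and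
   [K t = int_0^t g ln g]. Since [ln (g x / g t) = ln (g x) - ln (g t)], the CDCPE/EIT relation
   at [t] says [K t = (ln (g t) - a / (a + 1)) H t]. Differentiating this identity, the function
   [H / g - t / (a + 1)] has derivative 0, and it is [O(t)] because [0 <= H t <= t g t]; so
   [H t = t g t / (a + 1)], which turns the derivative of [ln g] into [a / t]: [g = e^b t^a].
   Conversely [g = e^b t^a <= 1] satisfies the identity, by the same "derivative 0 and O(t)"
   argument applied to [H - t g / (a + 1)] and to [K - (ln g - a / (a + 1)) H].
   Rows and columns together make [ln F(x,y)] affine in [ln x] with slope [1 + theta ln y] and
   affine in [ln y] with slope [1 + theta ln x], i.e. [ln F = m + ln x + ln y + theta ln x ln y];
   finally [m = 0] because [F <= 1] while [F(s,s) -> 1] as [s -> 1]. *)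

From Pilot Require Import Defs.
From Stdlib Require Import Reals Lra List ClassicalEpsilon.
From Coquelicot Require Import Coquelicot.
Open Scope R_scope.

Lemma ln_lt_0 x : 0 < x < 1 -> ln x < 0.
Proof. intros Hx. rewrite <- ln_1. apply ln_increasing; lra. Qed.

Lemma ln_le_0 x : 0 < x <= 1 -> ln x <= 0.
Proof.
  intros [Hx [Hx1 | ->]]; [left; apply ln_lt_0; lra | rewrite ln_1; lra].
Qed.

Lemma ln_le_sub_1 x : 0 < x -> ln x <= x - 1.
Proof.
  intros Hx. pose proof (exp_ineq1_le (ln x)) as H.
  rewrite exp_ln in H by exact Hx. lra.
Qed.

Lemma xlnx_bounds x : 0 < x <= 1 -> -1 <= x * ln x <= 0.
Proof.
  intros Hx. pose proof (ln_le_0 x Hx). split; [| nra].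
  pose proof (ln_le_sub_1 (/ x) (Rinv_0_lt_compat x (proj1 Hx))) as Hinv.
  rewrite ln_Rinv in Hinv by lra.
  assert (Hmul : x * - ln x <= x * (/ x - 1)) by (apply Rmult_le_compat_l; lra).
  replace (x * (/ x - 1)) with (1 - x) in Hmul by (field; lra). lra.
Qed.

Lemma le_0_of_le_linear x C : (forall t, 0 < t < 1 -> x <= C * t) -> x <= 0.
Proof.
  intros Hx. apply Rnot_lt_le. intros Hpos.
  set (k := 2 * (Rabs C + 1)).
  assert (Hk : 0 < k) by (pose proof (Rabs_pos C); unfold k; lra).
  set (t := Rmin (1 / 2) (x / k)).
  assert (Ht : 0 < t) by (apply Rmin_glb_lt; [lra | apply Rdiv_lt_0_compat; lra]).
  assert (Htk : t * k <= x) by (apply Rle_div_r; [exact Hk | apply Rmin_r]).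
  assert (Ht1 : t <= 1 / 2) by apply Rmin_l.
  pose proof (Rle_abs C). pose proof (Hx t ltac:(lra)). unfold k in Htk.
  assert (C * t <= Rabs C * t) by (apply Rmult_le_compat_r; lra). lra.
Qed.

Lemma locally_unit_interval t : 0 < t < 1 -> locally t (fun s => 0 < s < 1).
Proof.
  intros Ht. apply (locally_interval _ t 0 1); simpl; [lra | lra |].
  intros s Hs0 Hs1. simpl in *. lra.
Qed.

Lemma zero_derive_const (f : R -> R) :
  (forall t, 0 < t < 1 -> is_derive f t 0) ->
  forall x y, 0 < x < 1 -> 0 < y < 1 -> f x = f y.
Proof.
  intros Hd x y Hx Hy.
  assert (Hin : forall z, Rmin x y <= z <= Rmax x y -> 0 < z < 1).
  { intros z Hz. split.
    - apply Rlt_le_trans with (Rmin x y); [apply Rmin_glb_lt | ]; lra.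
    - apply Rle_lt_trans with (Rmax x y); [| apply Rmax_lub_lt]; lra. }
  destruct (MVT_gen f x y (fun _ => 0)) as [c [_ Hc]].
  - intros z Hz. apply Hd, Hin. lra.
  - intros z Hz. apply continuity_pt_filterlim.
    apply (@ex_derive_continuous R_AbsRing R_NormedModule). exists 0. apply Hd, Hin, Hz.
  - lra.
Qed.

Lemma zero_derive_eq_0 (f : R -> R) C :
  (forall t, 0 < t < 1 -> is_derive f t 0) ->
  (forall t, 0 < t < 1 -> Rabs (f t) <= C * t) ->
  forall t, 0 < t < 1 -> f t = 0.
Proof.
  intros Hd Hb t Ht. apply Rabs_eq_0, Rle_antisym; [| apply Rabs_pos].
  apply (le_0_of_le_linear _ C). intros s Hs.
  rewrite (zero_derive_const f Hd t s Ht Hs). apply Hb, Hs.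
Qed.

(* Coquelicot states its derivative rules over abstract modules ([plus], [scal], ...); these
   restatements over [R] let [field] and [lra] close the resulting equations. *)
Lemma is_derive_change (f : R -> R) (t l l' : R) :
  is_derive f t l -> l = l' -> is_derive f t l'.
Proof. now intros Hf <-. Qed.

Lemma is_derive_Rconst (c : R) t : is_derive (fun _ => c) t 0.
Proof. exact (is_derive_const c t). Qed.

Lemma is_derive_Rid t : is_derive (fun s : R => s) t 1.
Proof. exact (is_derive_id t). Qed.

Lemma is_derive_Rplus (f h : R -> R) t df dh :
  is_derive f t df -> is_derive h t dh -> is_derive (fun s => f s + h s) t (df + dh).
Proof. exact (is_derive_plus f h t df dh). Qed.

Lemma is_derive_Rminus (f h : R -> R) t df dh :
  is_derive f t df -> is_derive h t dh -> is_derive (fun s => f s - h s) t (df - dh).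
Proof. exact (is_derive_minus f h t df dh). Qed.

Lemma is_derive_Rmult (f h : R -> R) t df dh :
  is_derive f t df -> is_derive h t dh ->
  is_derive (fun s => f s * h s) t (df * h t + f t * dh).
Proof. intros Hf Hh. exact (is_derive_mult f h t df dh Hf Hh Rmult_comm). Qed.

Lemma is_derive_ext_unit (f h : R -> R) (t l : R) :
  0 < t < 1 -> (forall s, 0 < s < 1 -> f s = h s) ->
  is_derive f t l -> is_derive h t l.
Proof.
  intros Ht Hfh. apply is_derive_ext_loc.
  apply (filter_imp (fun s => 0 < s < 1)); [exact Hfh | now apply locally_unit_interval].
Qed.

Lemma is_derive_RInt_0 (f : R -> R) t :
  (forall s, 0 < s < 1 -> ex_RInt f 0 s) -> continuous f t -> 0 < t < 1 ->
  is_derive (fun s => RInt f 0 s) t (f t).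
Proof.
  intros Hint Hc Ht. apply is_derive_RInt with (a := 0); [| exact Hc].
  apply (filter_imp (fun s => 0 < s < 1)); [| now apply locally_unit_interval].
  intros s Hs. apply RInt_correct, Hint, Hs.
Qed.

Lemma is_derive_of_ln (g : R -> R) t l :
  locally t (fun s => 0 < g s) -> is_derive (fun s => ln (g s)) t l ->
  is_derive g t (l * g t).
Proof.
  intros Hpos Hl.
  apply (is_derive_ext_loc (fun s => exp (ln (g s)))).
  - apply (filter_imp (fun s => 0 < g s)); [| exact Hpos].
    intros s Hs. exact (exp_ln _ Hs).
  - rewrite <- (exp_ln (g t)) by exact (locally_singleton _ _ Hpos).
    exact (is_derive_comp exp (fun s => ln (g s)) t _ l (is_derive_exp _) Hl).
Qed.

Lemma continuous_of_small_increments (g : R -> R) :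
  (forall x y, 0 < x -> x <= y -> y < 1 -> g x <= g y) ->
  (forall eps, 0 < eps -> exists d, 0 < d /\
     forall x y, 0 < x -> x <= y -> y < 1 -> y - x < d -> g y - g x < eps) ->
  forall x, 0 < x < 1 -> continuous g x.
Proof.
  intros Hmono Hinc x Hx. apply continuity_pt_filterlim, continuity_pt_locally.
  intros eps. destruct (Hinc eps (cond_pos eps)) as [d [Hd Hdd]].
  assert (Hr : 0 < Rmin d (Rmin x (1 - x))) by (repeat apply Rmin_glb_lt; lra).
  exists (mkposreal _ Hr). intros u Hu. change (Rabs (u - x) < Rmin d (Rmin x (1 - x))) in Hu.
  pose proof (Rmin_l d (Rmin x (1 - x))). pose proof (Rmin_r d (Rmin x (1 - x))).
  pose proof (Rmin_l x (1 - x)). pose proof (Rmin_r x (1 - x)).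
  apply Rabs_def2 in Hu. apply Rabs_def1.
  - destruct (Rle_or_lt x u).
    + apply Hdd; lra.
    + pose proof (Hmono u x ltac:(lra) ltac:(lra) ltac:(lra)). pose proof (cond_pos eps). lra.
  - destruct (Rle_or_lt x u).
    + pose proof (Hmono x u ltac:(lra) ltac:(lra) ltac:(lra)). pose proof (cond_pos eps). lra.
    + assert (g x - g u < eps) by (apply Hdd; lra). lra.
Qed.

Lemma eq_log_linear_of_derive (f : R -> R) a :
  (forall t, 0 < t < 1 -> is_derive f t (a / t)) ->
  exists b, forall t, 0 < t < 1 -> f t = b + a * ln t.
Proof.
  intros Hf. set (psi := fun s => f s - a * ln s).
  assert (dpsi : forall t, 0 < t < 1 -> is_derive psi t 0).
  { intros t Ht. eapply is_derive_change.
    - apply is_derive_Rminus; [apply Hf, Ht | apply is_derive_scal, is_derive_ln; lra].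
    - field. lra. }
  exists (psi (1 / 2)). intros t Ht.
  rewrite <- (zero_derive_const psi dpsi t (1 / 2)) by lra. unfold psi. ring.
Qed.

Lemma is_derive_log_linear (f : R -> R) a b :
  (forall s, 0 < s < 1 -> f s = b + a * ln s) ->
  forall t, 0 < t < 1 -> is_derive f t (a / t).
Proof.
  intros Hf t Ht. apply (is_derive_ext_unit (fun s => b + a * ln s)); [exact Ht | |].
  - intros s Hs. symmetry. apply Hf, Hs.
  - eapply is_derive_change.
    + apply is_derive_Rplus; [apply is_derive_Rconst | apply is_derive_scal, is_derive_ln; lra].
    + field. lra.
Qed.

Lemma inv_succ_bounds a : 0 <= a -> 0 < / (a + 1) <= 1.
Proof.
  intros Ha. split; [apply Rinv_0_lt_compat; lra |].
  rewrite <- Rinv_1. apply Rinv_le_contravar; lra.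
Qed.

Record regular_profile (g : R -> R) : Prop := {
  profile_pos : forall x, 0 < x < 1 -> 0 < g x;
  profile_mono : forall x y, 0 < x -> x <= y -> y < 1 -> g x <= g y;
  profile_cont : forall x, 0 < x < 1 -> continuous g x;
  profile_int : forall t, 0 < t < 1 -> ex_RInt g 0 t;
  profile_xlnx_int : forall t, 0 < t < 1 -> ex_RInt (fun x => g x * ln (g x)) 0 t }.

Section Profile.

Variable g : R -> R.
Hypothesis g_reg : regular_profile g.

Let H (s : R) : R := RInt g 0 s.
Let K (s : R) : R := RInt (fun x => g x * ln (g x)) 0 s.

Lemma profile_RInt_bounds t : 0 < t < 1 -> 0 < H t <= t * g t.
Proof.
  intros Ht. destruct g_reg as [gpos gmono gcont gint _]. unfold H. split.
  - assert (Ig2 : ex_RInt g (t / 2) t) by (apply (ex_RInt_Chasles_2 g 0); [lra | auto]).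
    rewrite <- (RInt_Chasles g 0 (t / 2) t (gint (t / 2) ltac:(lra)) Ig2).
    assert (0 <= RInt g 0 (t / 2)).
    { apply RInt_ge_0; [lra | apply gint; lra |]. intros x Hx. left. apply gpos. lra. }
    assert (0 < RInt g (t / 2) t).
    { apply RInt_gt_0; [lra | |]; intros x Hx; [apply gpos | apply gcont]; lra. }
    change (0 < RInt g 0 (t / 2) + RInt g (t / 2) t). lra.
  - apply Rle_trans with (RInt (fun _ => g t) 0 t).
    + apply RInt_le; [lra | auto | apply ex_RInt_const |].
      intros x Hx. apply gmono; lra.
    + rewrite RInt_const. right. change ((t - 0) * g t = t * g t). ring.
Qed.

Lemma is_derive_profile_RInt t : 0 < t < 1 -> is_derive H t (g t).
Proof.
  intros Ht. apply is_derive_RInt_0; [apply (profile_int g g_reg) | | exact Ht].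
  apply (profile_cont g g_reg), Ht.
Qed.

Lemma is_derive_profile_xlnx_RInt t : 0 < t < 1 -> is_derive K t (g t * ln (g t)).
Proof.
  intros Ht. destruct g_reg as [gpos _ gcont _ xint].
  apply (is_derive_RInt_0 (fun x => g x * ln (g x))); auto.
  apply (continuous_mult g (fun x => ln (g x))); [auto |].
  apply (continuous_comp g ln); [auto |].
  apply (@ex_derive_continuous R_AbsRing R_NormedModule). exists (/ g t).
  apply is_derive_ln, gpos, Ht.
Qed.

Lemma locally_profile_pos t : 0 < t < 1 -> locally t (fun s => 0 < g s).
Proof.
  intros Ht. apply (filter_imp (fun s => 0 < s < 1)); [| now apply locally_unit_interval].
  exact (profile_pos g g_reg).
Qed.

Section Relation.

Variable a : R.
Hypothesis a_ge0 : 0 <= a.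
Hypothesis g_rel : forall t, 0 < t < 1 -> K t = (ln (g t) - a / (a + 1)) * H t.

Lemma is_derive_ln_profile_of_relation t : 0 < t < 1 ->
  is_derive (fun s => ln (g s)) t (a / (a + 1) * g t / H t).
Proof.
  intros Ht. pose proof (profile_RInt_bounds t Ht).
  apply (is_derive_ext_unit (fun s => a / (a + 1) + K s / H s)); [exact Ht | |].
  - intros s Hs. pose proof (profile_RInt_bounds s Hs). rewrite g_rel by exact Hs. field. lra.
  - eapply is_derive_change.
    + apply is_derive_Rplus; [apply is_derive_Rconst |].
      apply is_derive_div; [apply is_derive_profile_xlnx_RInt, Ht |
        apply is_derive_profile_RInt, Ht | lra].
    + rewrite g_rel by exact Ht. field. lra.
Qed.

Lemma profile_RInt_of_relation t : 0 < t < 1 -> H t = t * g t / (a + 1).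
Proof.
  pose proof (profile_pos g g_reg) as gpos.
  set (phi := fun s => H s / g s - / (a + 1) * s).
  assert (phi0 : forall s, 0 < s < 1 -> phi s = 0).
  { apply (zero_derive_eq_0 phi 1).
    - intros s Hs. pose proof (profile_RInt_bounds s Hs). pose proof (gpos s Hs).
      eapply is_derive_change.
      + apply is_derive_Rminus; [| apply is_derive_scal, is_derive_Rid].
        apply is_derive_div; [apply is_derive_profile_RInt, Hs | | lra].
        apply is_derive_of_ln; [apply locally_profile_pos, Hs |].
        apply is_derive_ln_profile_of_relation, Hs.
      + field. lra.
    - intros s Hs. pose proof (profile_RInt_bounds s Hs). pose proof (gpos s Hs).
      pose proof (inv_succ_bounds a a_ge0).
      assert (0 <= H s / g s <= s).
      { split; [apply Rdiv_le_0_compat; lra | apply Rle_div_l; lra]. }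
      unfold phi. apply Rabs_le. nra. }
  intros Ht. pose proof (phi0 t Ht) as E. pose proof (gpos t Ht). unfold phi in E.
  replace (H t) with (H t / g t * g t) by (field; lra). rewrite (Rminus_diag_uniq _ _ E).
  field. lra.
Qed.

Lemma profile_log_linear_of_relation :
  exists b, forall t, 0 < t < 1 -> ln (g t) = b + a * ln t.
Proof.
  apply eq_log_linear_of_derive. intros t Ht.
  eapply is_derive_change; [apply is_derive_ln_profile_of_relation, Ht |].
  pose proof (profile_pos g g_reg t Ht).
  rewrite (profile_RInt_of_relation t Ht). field. lra.
Qed.

End Relation.

Lemma profile_xlnx_RInt_bounds t : (forall x, 0 < x < 1 -> g x <= 1) ->
  0 < t < 1 -> - t <= K t <= 0.
Proof.
  intros gle1 Ht.
  assert (Hx : forall x, 0 < x < t -> -1 <= g x * ln (g x) <= 0).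
  { intros x Hx. apply xlnx_bounds. split; [apply (profile_pos g g_reg) | apply gle1]; lra. }
  assert (Ix := profile_xlnx_int g g_reg t Ht). unfold K. split.
  - apply Rle_trans with (RInt (fun _ => -1) 0 t).
    + rewrite RInt_const. right. change (- t = (t - 0) * -1). ring.
    + apply RInt_le; [lra | apply ex_RInt_const | exact Ix |]. apply Hx.
  - apply Rle_trans with (RInt (fun _ => 0) 0 t).
    + apply RInt_le; [lra | exact Ix | apply ex_RInt_const |]. apply Hx.
    + rewrite RInt_const. right. change ((t - 0) * 0 = 0). ring.
Qed.

Section LogLinear.

Variables a b : R.
Hypothesis a_ge0 : 0 <= a.
Hypothesis g_le1 : forall t, 0 < t < 1 -> g t <= 1.
Hypothesis g_log : forall t, 0 < t < 1 -> ln (g t) = b + a * ln t.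

Lemma is_derive_profile_of_log_linear t : 0 < t < 1 -> is_derive g t (a / t * g t).
Proof.
  intros Ht. apply is_derive_of_ln; [apply locally_profile_pos, Ht |].
  apply (is_derive_log_linear _ a b g_log), Ht.
Qed.

Lemma profile_RInt_of_log_linear t : 0 < t < 1 -> H t = t * g t / (a + 1).
Proof.
  set (phi := fun s => H s - / (a + 1) * (s * g s)).
  assert (phi0 : forall s, 0 < s < 1 -> phi s = 0).
  { apply (zero_derive_eq_0 phi 1).
    - intros s Hs. eapply is_derive_change.
      + apply is_derive_Rminus; [apply is_derive_profile_RInt, Hs |].
        apply is_derive_scal, is_derive_Rmult;
          [apply is_derive_Rid | apply is_derive_profile_of_log_linear, Hs].
      + cbv beta. field. lra.
    - intros s Hs. pose proof (profile_RInt_bounds s Hs). pose proof (inv_succ_bounds a a_ge0).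
      pose proof (profile_pos g g_reg s Hs). pose proof (g_le1 s Hs).
      assert (0 <= s * g s <= s) by (split; nra).
      unfold phi. apply Rabs_le. nra. }
  intros Ht. pose proof (phi0 t Ht) as E. unfold phi in E. unfold Rdiv. lra.
Qed.

Lemma relation_of_profile_log_linear t : 0 < t < 1 ->
  K t = (ln (g t) - a / (a + 1)) * H t.
Proof.
  set (c := a / (a + 1)).
  set (D := fun s => K s - (ln (g s) - c) * H s).
  assert (D0 : forall s, 0 < s < 1 -> D s = 0).
  { apply (zero_derive_eq_0 D 3).
    - intros s Hs. pose proof (profile_pos g g_reg s Hs). eapply is_derive_change.
      + apply is_derive_Rminus; [apply is_derive_profile_xlnx_RInt, Hs |].
        apply is_derive_Rmult; [| apply is_derive_profile_RInt, Hs].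
        apply is_derive_Rminus; [| apply is_derive_Rconst].
        apply (is_derive_log_linear _ a b g_log), Hs.
      + rewrite profile_RInt_of_log_linear by exact Hs. unfold c. field. lra.
    - intros s Hs. pose proof (profile_pos g g_reg s Hs). pose proof (g_le1 s Hs).
      pose proof (xlnx_bounds (g s) ltac:(lra)).
      pose proof (profile_xlnx_RInt_bounds s g_le1 Hs). pose proof (inv_succ_bounds a a_ge0).
      assert (Hc : 0 <= c < 1).
      { unfold c. split; [apply Rdiv_le_0_compat; lra | apply Rlt_div_l; lra]. }
      set (v := g s * ln (g s) - c * g s).
      assert (-2 <= v <= 0) by (assert (0 <= c * g s <= 1) by nra; unfold v; lra).
      assert (-2 <= / (a + 1) * v <= 0) by nra.
      unfold D. rewrite profile_RInt_of_log_linear by exact Hs.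
      replace ((ln (g s) - c) * (s * g s / (a + 1))) with (s * (/ (a + 1) * v))
        by (unfold v; field; lra).
      apply Rabs_le. nra. }
  intros Ht. pose proof (D0 t Ht) as E. unfold D in E. fold c. lra.
Qed.

End LogLinear.

End Profile.

Lemma RInt_Defs_eq f a b :
  inhabited (Riemann_integrable f a b) -> Defs.RInt f a b = RInt f a b.
Proof.
  intros [pr]. unfold Defs.RInt.
  destruct (epsilon_spec (inhabits 0)
    (fun v => exists pr : Riemann_integrable f a b, RiemannInt pr = v)
    (ex_intro _ (RiemannInt pr) (ex_intro _ pr eq_refl))) as [pr' E].
  rewrite <- E. symmetry. apply RInt_Reals.
Qed.

Lemma is_RInt_xlnx_rescale (g : R -> R) t :
  0 < t -> (forall x, 0 < x <= t -> 0 < g x) ->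
  ex_RInt g 0 t -> ex_RInt (fun x => g x / g t * ln (g x / g t)) 0 t ->
  is_RInt (fun x => g x * ln (g x)) 0 t
    (g t * RInt (fun x => g x / g t * ln (g x / g t)) 0 t + ln (g t) * RInt g 0 t).
Proof.
  intros Ht gpos Ig Ie. assert (gt := gpos t ltac:(lra)).
  apply (is_RInt_ext (V := R_NormedModule)
    (fun x => g t * (g x / g t * ln (g x / g t)) + ln (g t) * g x)).
  - intros x Hx. rewrite Rmin_left, Rmax_right in Hx by lra.
    assert (gx := gpos x ltac:(lra)).
    enough (E : g t * (g x / g t * ln (g x / g t)) + ln (g t) * g x = g x * ln (g x))
      by exact E.
    rewrite ln_div by lra. field. lra.
  - exact (is_RInt_plus _ _ _ _ _ _ (is_RInt_scal _ _ _ (g t) _ (RInt_correct _ _ _ Ie))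
      (is_RInt_scal _ _ _ (ln (g t)) _ (RInt_correct _ _ _ Ig))).
Qed.

Lemma entropy_rescale_iff (g : R -> R) t c :
  0 < t -> (forall x, 0 < x <= t -> 0 < g x) ->
  ex_RInt g 0 t -> ex_RInt (fun x => g x / g t * ln (g x / g t)) 0 t ->
  (- RInt (fun x => g x / g t * ln (g x / g t)) 0 t = c * (/ g t * RInt g 0 t) <->
   RInt (fun x => g x * ln (g x)) 0 t = (ln (g t) - c) * RInt g 0 t :> R).
Proof.
  intros Ht gpos Ig Ie. assert (gt := gpos t ltac:(lra)).
  rewrite (is_RInt_unique _ _ _ _ (is_RInt_xlnx_rescale g t Ht gpos Ig Ie)).
  set (E := RInt (fun x => g x / g t * ln (g x / g t)) 0 t).
  set (M := RInt g 0 t).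
  split; intros Hrel.
  - replace E with (- (c * (/ g t * M))) by lra. field. lra.
  - apply (Rmult_eq_reg_l (g t)); [| lra].
    replace (g t * - E) with (c * M) by lra. field. lra.
Qed.

Definition two_increasing (F : R -> R -> R) : Prop :=
  forall a1 b1 a2 b2, a1 <= b1 -> a2 <= b2 -> 0 <= rect_mass F a1 b1 a2 b2.

Definition null_off_quadrant (F : R -> R -> R) : Prop :=
  forall x1 x2, x1 <= 0 \/ x2 <= 0 -> F x1 x2 = 0.

Definition rect_abs_cont (F : R -> R -> R) : Prop :=
  forall eps, 0 < eps -> exists delta, 0 < delta /\
    forall a1 b1 a2 b2, a1 <= b1 -> a2 <= b2 -> (b1 - a1) * (b2 - a2) < delta ->
      rect_mass F a1 b1 a2 b2 < eps.

Lemma rect_abs_cont_of_biv_abs_cont F : biv_abs_cont F -> rect_abs_cont F.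
Proof.
  intros Hac eps Heps. destruct (Hac eps Heps) as [d [Hd Hl]].
  exists d. split; [exact Hd |]. intros a1 b1 a2 b2 H1 H2 Harea.
  specialize (Hl ((a1, b1, a2, b2) :: nil)). simpl in Hl.
  rewrite !Rplus_0_r in Hl. apply Hl; [| repeat constructor | exact Harea].
  constructor; [split; assumption | constructor].
Qed.

Lemma rect_mass_flip F a1 b1 a2 b2 :
  rect_mass (fun x y => F y x) a1 b1 a2 b2 = rect_mass F a2 b2 a1 b1.
Proof. unfold rect_mass. ring. Qed.

Lemma two_increasing_flip F : two_increasing F -> two_increasing (fun x y => F y x).
Proof. intros HF a1 b1 a2 b2 H1 H2. rewrite rect_mass_flip. apply HF; assumption. Qed.

Lemma null_off_quadrant_flip F : null_off_quadrant F -> null_off_quadrant (fun x y => F y x).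
Proof. intros HF x1 x2 Hx. apply HF. tauto. Qed.

Lemma rect_abs_cont_flip F : rect_abs_cont F -> rect_abs_cont (fun x y => F y x).
Proof.
  intros HF eps Heps. destruct (HF eps Heps) as [d [Hd Hdd]].
  exists d. split; [exact Hd |]. intros a1 b1 a2 b2 H1 H2 Harea.
  rewrite rect_mass_flip. apply Hdd; [assumption | assumption | lra].
Qed.

Definition cdcpe_finite (F : R -> R -> R) : Prop :=
  forall t1 t2, 0 < t1 < 1 -> 0 < t2 < 1 -> 0 < F t1 t2 ->
    inhabited (Riemann_integrable (cdcpe1_integrand F t1 t2) 0 t1) /\
    inhabited (Riemann_integrable (cdcpe2_integrand F t1 t2) 0 t2) /\
    inhabited (Riemann_integrable (fun x1 => F x1 t2) 0 t1) /\
    inhabited (Riemann_integrable (fun x2 => F t1 x2) 0 t2).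

Lemma cdcpe_finite_flip F : cdcpe_finite F -> cdcpe_finite (fun x y => F y x).
Proof.
  intros HF t1 t2 Ht1 Ht2 Hpos.
  destruct (HF t2 t1 Ht2 Ht1 Hpos) as (I1 & I2 & I3 & I4). exact (conj I2 (conj I1 (conj I4 I3))).
Qed.

Record regular_biv_cdf (G : R -> R -> R) : Prop := {
  cdf_two_increasing : two_increasing G;
  cdf_null : null_off_quadrant G;
  cdf_abs_cont : rect_abs_cont G;
  cdf_finite : cdcpe_finite G }.

Lemma regular_biv_cdf_flip G : regular_biv_cdf G -> regular_biv_cdf (fun x y => G y x).
Proof.
  intros [H2 Hn Hac Hfin]. split; [apply two_increasing_flip | apply null_off_quadrant_flip |
    apply rect_abs_cont_flip | apply cdcpe_finite_flip]; assumption.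
Qed.

Lemma row_mono G : regular_biv_cdf G -> forall x y t, x <= y -> 0 <= t -> G x t <= G y t.
Proof.
  intros [H2 Hn _ _] x y t Hxy Ht. pose proof (H2 x y 0 t Hxy Ht) as Hm. unfold rect_mass in Hm.
  rewrite (Hn y 0), (Hn x 0) in Hm by (right; lra). lra.
Qed.

Lemma row_increment_small G : regular_biv_cdf G -> forall eps, 0 < eps -> exists d, 0 < d /\
  forall x y t, x <= y -> 0 <= t <= 1 -> y - x < d -> G y t - G x t < eps.
Proof.
  intros [_ Hn Hac _] eps Heps. destruct (Hac eps Heps) as [d [Hd Hdd]].
  exists d. split; [exact Hd |]. intros x y t Hxy Ht Hd'.
  assert (Hm : rect_mass G x y 0 t < eps) by (apply Hdd; nra).
  unfold rect_mass in Hm. rewrite (Hn y 0), (Hn x 0) in Hm by (right; lra). lra.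
Qed.

Section Rows.

Variable G : R -> R -> R.
Hypothesis G_reg : regular_biv_cdf G.
Hypothesis G_pos : forall x y, 0 < x < 1 -> 0 < y < 1 -> 0 < G x y.
Lemma row_integrable x y : 0 < x < 1 -> 0 < y < 1 ->
  inhabited (Riemann_integrable (cdcpe1_integrand G x y) 0 x) /\
  inhabited (Riemann_integrable (fun s => G s y) 0 x).
Proof.
  intros Hx Hy. destruct (cdf_finite G G_reg x y Hx Hy (G_pos x y Hx Hy)) as (I1 & _ & I3 & _).
  exact (conj I1 I3).
Qed.

Lemma row_regular y : 0 < y < 1 -> regular_profile (fun x => G x y).
Proof.
  intros Hy.
  assert (Hmono : forall x x', 0 < x -> x <= x' -> x' < 1 -> G x y <= G x' y).
  { intros x x' _ Hxx' _. apply (row_mono G G_reg); lra. }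
  assert (Hint : forall t, 0 < t < 1 -> ex_RInt (fun x => G x y) 0 t).
  { intros t Ht. destruct (row_integrable t y Ht Hy) as [_ [I]]. exact (ex_RInt_Reals_1 _ _ _ I). }
  split; [intros x Hx; apply G_pos; assumption | exact Hmono | | exact Hint |].
  - apply continuous_of_small_increments; [exact Hmono |].
    intros eps Heps. destruct (row_increment_small G G_reg eps Heps) as [d [Hd Hdd]].
    exists d. split; [exact Hd |]. intros x x' _ Hxx' _ Hdx. apply Hdd; lra.
  - intros t Ht. destruct (row_integrable t y Ht Hy) as [[I] _].
    eexists. apply is_RInt_xlnx_rescale; [lra | | apply Hint, Ht | exact (ex_RInt_Reals_1 _ _ _ I)].
    intros x Hx. apply G_pos; lra.
Qed.

Lemma row_relation_iff t1 t2 c : 0 < t1 < 1 -> 0 < t2 < 1 ->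
  (CDCPE1 G t1 t2 = c * EIT1 G t1 t2 <->
   RInt (fun x => G x t2 * ln (G x t2)) 0 t1 = (ln (G t1 t2) - c) * RInt (fun x => G x t2) 0 t1 :> R).
Proof.
  intros Ht1 Ht2. destruct (row_integrable t1 t2 Ht1 Ht2) as [I1 I2].
  unfold CDCPE1, EIT1. rewrite (RInt_Defs_eq _ _ _ I1), (RInt_Defs_eq _ _ _ I2).
  destruct I1 as [I1], I2 as [I2].
  apply (entropy_rescale_iff (fun x => G x t2)); [lra | | exact (ex_RInt_Reals_1 _ _ _ I2) |
    exact (ex_RInt_Reals_1 _ _ _ I1)].
  intros x Hx. apply G_pos; lra.
Qed.

Lemma row_log_linear theta : theta <= 0 ->
  (forall t1 t2, 0 < t1 < 1 -> 0 < t2 < 1 ->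
     CDCPE1 G t1 t2 = (1 + theta * ln t2) / (2 + theta * ln t2) * EIT1 G t1 t2) ->
  forall y, 0 < y < 1 -> exists b, forall x, 0 < x < 1 ->
    ln (G x y) = b + (1 + theta * ln y) * ln x.
Proof.
  intros Htheta Hrel y Hy.
  assert (Ha : 0 <= 1 + theta * ln y) by (pose proof (ln_lt_0 y Hy); nra).
  apply (profile_log_linear_of_relation (fun x => G x y) (row_regular y Hy) _ Ha).
  intros t Ht. apply (proj1 (row_relation_iff t y _ Ht Hy)).
  replace (1 + theta * ln y + 1) with (2 + theta * ln y) by ring. apply Hrel; assumption.
Qed.

Lemma row_relation_of_log_form theta : theta <= 0 ->
  (forall x y, 0 < x < 1 -> 0 < y < 1 -> ln (G x y) = ln x + ln y + theta * ln x * ln y) ->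
  forall t1 t2, 0 < t1 < 1 -> 0 < t2 < 1 ->
    CDCPE1 G t1 t2 = (1 + theta * ln t2) / (2 + theta * ln t2) * EIT1 G t1 t2.
Proof.
  intros Htheta Hlog t1 t2 Ht1 Ht2. pose proof (ln_lt_0 t2 Ht2).
  assert (Ha : 0 <= 1 + theta * ln t2) by nra.
  apply (proj2 (row_relation_iff t1 t2 _ Ht1 Ht2)).
  replace (2 + theta * ln t2) with (1 + theta * ln t2 + 1) by ring.
  apply (relation_of_profile_log_linear (fun x => G x t2) (row_regular t2 Ht2) _ (ln t2) Ha);
    [| | exact Ht1].
  - intros t Ht. apply Rnot_lt_le. intros Hlt.
    rewrite <- exp_0, <- (exp_ln (G t t2)) in Hlt by (apply G_pos; assumption).
    apply exp_lt_inv in Hlt. rewrite Hlog in Hlt by assumption.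
    pose proof (ln_lt_0 t Ht). nra.
  - intros t Ht. cbv beta. rewrite Hlog by assumption. ring.
Qed.

End Rows.

Lemma log_bilinear_of_sections theta (L : R -> R -> R) :
  (forall y, 0 < y < 1 -> exists b, forall x, 0 < x < 1 -> L x y = b + (1 + theta * ln y) * ln x) ->
  (forall x, 0 < x < 1 -> exists b, forall y, 0 < y < 1 -> L x y = b + (1 + theta * ln x) * ln y) ->
  exists m, forall x y, 0 < x < 1 -> 0 < y < 1 ->
    L x y = m + (ln x + ln y + theta * ln x * ln y).
Proof.
  intros Hrow Hcol. destruct (Hcol (1 / 2) ltac:(lra)) as [b Hb].
  exists (b - ln (1 / 2)). intros x y Hx Hy.
  destruct (Hrow y Hy) as [b' Hb'].
  pose proof (Hb y Hy) as E1. rewrite (Hb' (1 / 2)) in E1 by lra.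
  rewrite (Hb' x Hx). nra.
Qed.

Lemma log_offset_eq_0 theta m (u : R -> R) : theta <= 0 ->
  (forall s, 0 < s < 1 -> 0 < u s <= 1) ->
  (forall eps, 0 < eps -> exists s, 0 < s < 1 /\ 1 - eps < u s) ->
  (forall s, 0 < s < 1 -> ln (u s) = m + (ln s + ln s + theta * ln s * ln s)) ->
  m = 0.
Proof.
  intros Htheta Hu Hnear Hlog. apply Rle_antisym.
  - apply (le_0_of_le_linear m (2 - theta)). intros d Hd.
    set (s := exp (- d)).
    assert (Hs : 0 < s < 1).
    { split; [apply exp_pos | rewrite <- exp_0; apply exp_increasing; lra]. }
    pose proof (ln_le_0 (u s) (Hu s Hs)) as Hle.
    assert (Hls : ln s = - d) by apply ln_exp.
    rewrite Hlog, Hls in Hle by exact Hs.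
    assert (0 <= - theta * d * (1 - d)) by (apply Rmult_le_pos; [apply Rmult_le_pos |]; lra).
    nra.
  - apply Rnot_lt_le. intros Hm.
    assert (Hgap : exp m < 1) by (rewrite <- exp_0; apply exp_increasing, Hm).
    destruct (Hnear (1 - exp m) ltac:(lra)) as [s [Hs Hus]].
    replace (1 - (1 - exp m)) with (exp m) in Hus by ring.
    rewrite <- (exp_ln (u s)) in Hus by (apply Hu, Hs).
    apply exp_lt_inv in Hus. rewrite Hlog in Hus by exact Hs.
    pose proof (ln_lt_0 s Hs). nra.
Qed.

Lemma cdf_le_1 F : regular_biv_cdf F -> F 1 1 = 1 ->
  forall x y, 0 <= x <= 1 -> 0 <= y <= 1 -> F x y <= 1.
Proof.
  intros Freg H11 x y Hx Hy.
  pose proof (row_mono F Freg x 1 y ltac:(lra) ltac:(lra)).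
  pose proof (row_mono _ (regular_biv_cdf_flip F Freg) y 1 1 ltac:(lra) ltac:(lra)).
  simpl in *. lra.
Qed.

Lemma cdf_diag_near_1 F : regular_biv_cdf F -> F 1 1 = 1 ->
  forall eps, 0 < eps -> exists s, 0 < s < 1 /\ 1 - eps < F s s.
Proof.
  intros [_ Hn Hac _] H11 eps Heps. destruct (Hac (eps / 2) ltac:(lra)) as [d [Hd Hdd]].
  set (h := Rmin (1 / 2) (d / 2)).
  assert (0 < h) by (apply Rmin_glb_lt; lra).
  assert (h <= 1 / 2) by apply Rmin_l. assert (h <= d / 2) by apply Rmin_r.
  exists (1 - h). split; [lra |].
  (* [1 - F(s,s)] is the mass of the two strips [(s,1] x (0,1]] and [(0,s] x (s,1]] *)
  assert (A : rect_mass F (1 - h) 1 0 1 < eps / 2) by (apply Hdd; nra).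
  assert (B : rect_mass F 0 (1 - h) (1 - h) 1 < eps / 2) by (apply Hdd; nra).
  unfold rect_mass in A, B.
  rewrite (Hn 1 0), (Hn (1 - h) 0) in A by (right; lra).
  rewrite (Hn 0 1), (Hn 0 (1 - h)) in B by (left; lra). lra.
Qed.

Lemma Ftheta_exp_ln theta x y : 0 < x -> 0 < y ->
  Rpower x (1 + theta * ln y) * y = exp (ln x + ln y + theta * ln x * ln y).
Proof.
  intros Hx Hy. unfold Rpower.
  replace (ln x + ln y + theta * ln x * ln y) with ((1 + theta * ln y) * ln x + ln y) by ring.
  rewrite exp_plus, exp_ln by exact Hy. reflexivity.
Qed.

Theorem mainTheorem15 (theta : R) (F : R -> R -> R) :
  theta <= 0 ->
  is_biv_cdf (Ftheta theta) ->
  is_biv_cdf F ->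
  biv_abs_cont F ->
  supported_unit_square F ->
  (forall t1 t2, 0 < t1 < 1 -> 0 < t2 < 1 -> 0 < F t1 t2 ->
     inhabited (Riemann_integrable (cdcpe1_integrand F t1 t2) 0 t1) /\
     inhabited (Riemann_integrable (cdcpe2_integrand F t1 t2) 0 t2) /\
     inhabited (Riemann_integrable (fun x1 => F x1 t2) 0 t1) /\
     inhabited (Riemann_integrable (fun x2 => F t1 x2) 0 t2)) ->
  ((forall t1 t2, 0 < t1 < 1 -> 0 < t2 < 1 ->
      0 < F t1 t2 /\
      CDCPE1 F t1 t2 = (1 + theta * ln t2) / (2 + theta * ln t2) * EIT1 F t1 t2 /\
      CDCPE2 F t1 t2 = (1 + theta * ln t1) / (2 + theta * ln t1) * EIT2 F t1 t2)
   <->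
   (forall t1 t2, 0 < t1 < 1 -> 0 < t2 < 1 ->
      F t1 t2 = Rpower t1 (1 + theta * ln t2) * t2)).
Proof.
  intros Htheta _ [F2inc _] Fac [Fnull F11] Fin.
  assert (Freg : regular_biv_cdf F).
  { split; [exact F2inc | exact Fnull | apply rect_abs_cont_of_biv_abs_cont, Fac | exact Fin]. }
  (* Columns are treated as rows of the transpose: [CDCPE2 F t1 t2] and [EIT2 F t1 t2]
     are definitionally [CDCPE1] and [EIT1] of [fun x y => F y x] at [(t2, t1)]. *)
  pose proof (regular_biv_cdf_flip F Freg) as Ftreg.
  split.
  - intros HL.
    assert (Fpos : forall x y, 0 < x < 1 -> 0 < y < 1 -> 0 < F x y) by apply HL.
    destruct (log_bilinear_of_sections theta (fun x y => ln (F x y))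
      (row_log_linear F Freg Fpos theta Htheta
         (fun t1 t2 H1 H2 => proj1 (proj2 (HL t1 t2 H1 H2))))
      (row_log_linear _ Ftreg (fun x y Hx Hy => Fpos y x Hy Hx) theta Htheta
         (fun t1 t2 H1 H2 => proj2 (proj2 (HL t2 t1 H2 H1))))) as [m Hm].
    assert (m0 : m = 0).
    { apply (log_offset_eq_0 theta m (fun s => F s s) Htheta).
      - intros s Hs. split; [apply Fpos; assumption | apply cdf_le_1; auto; lra].
      - apply cdf_diag_near_1; assumption.
      - intros s Hs. apply Hm; assumption. }
    intros t1 t2 Ht1 Ht2.
    rewrite <- (exp_ln (F t1 t2)) by (apply Fpos; assumption).
    rewrite Hm, m0, Rplus_0_l, Ftheta_exp_ln by lra. reflexivity.
  - intros HR.
    assert (Hlog : forall x y, 0 < x < 1 -> 0 < y < 1 ->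
              ln (F x y) = ln x + ln y + theta * ln x * ln y).
    { intros x y Hx Hy. rewrite HR, Ftheta_exp_ln, ln_exp by lra. reflexivity. }
    assert (Fpos : forall x y, 0 < x < 1 -> 0 < y < 1 -> 0 < F x y).
    { intros x y Hx Hy. rewrite HR, Ftheta_exp_ln by lra. apply exp_pos. }
    intros t1 t2 Ht1 Ht2. split; [apply Fpos; assumption | split].
    + exact (row_relation_of_log_form F Freg Fpos theta Htheta Hlog t1 t2 Ht1 Ht2).
    + apply (row_relation_of_log_form _ Ftreg (fun x y Hx Hy => Fpos y x Hy Hx) theta Htheta);
        [intros x y Hx Hy; cbv beta; rewrite Hlog by assumption; ring | assumption | assumption].
Qed.
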